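(* Let $T_{\mu\nu}$ be a given stress-energy tensor on a four-dimensional spacetime, $\kappa=8\pi G/c^4$, $\Lambda\in\mathbb{R}$, and $f$ a differentiable real function. If a metric $g_{\mu\nu}$ is simultaneously a solution of Einstein's field equations $R_{\mu\nu}-\tfrac12 Rg_{\mu\nu}+\Lambda g_{\mu\nu}=\kappa T_{\mu\nu}$ and of the $f(R)$ field equations $f'(R)R_{\mu\nu}-\tfrac12 f(R)g_{\mu\nu}-\nabla_\mu\nabla_\nu f'(R)+\square f'(R)g_{\mu\nu}=\kappa T_{\mu\nu}$, and its Ricci scalar $R=g^{\mu\nu}R_{\mu\nu}$ equals a constant $k$, then $$k f'(k)-2f(k)+k-4\Lambda=0.$$
   Context: $R_{\mu\nu}$ is the Ricci tensor of $g_{\mu\nu}$, $\nabla$ its Levi-Civita connection and $\square=g^{\mu\nu}\nabla_\mu\nabla_\nu$. *)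

(* spacetime described in a coordinate chart U ⊆ R^4. *)
From HB Require Import structures.
From mathcomp Require Import all_boot all_order all_algebra.
From mathcomp Require Import all_classical all_reals all_analysis.

Set Implicit Arguments.
Unset Strict Implicit.
Unset Printing Implicit Defensive.

Import Order.TTheory GRing.Theory Num.Theory.
Import numFieldNormedType.Exports.
Local Open Scope classical_set_scope.
Local Open Scope ring_scope.

Notation point R := 'rV[R]_4.

Definition pd {R : realType} (F : point R -> R) (k : 'I_4) (x : point R) : R :=
  derive F x (delta_mx 0 k).

Definition ginv {R : realType} (g : point R -> 'M[R]_4) (x : point R) : 'M[R]_4 :=
  invmx (g x).

Definition christoffel {R : realType} (g : point R -> 'M[R]_4) (a b c : 'I_4)
  (x : point R) : R :=
  2^-1 * \sum_(d < 4) ginv g x a d *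
     (pd (fun y => g y d c) b x + pd (fun y => g y d b) c x
      - pd (fun y => g y b c) d x).

Definition ricci {R : realType} (g : point R -> 'M[R]_4) (b c : 'I_4)
  (x : point R) : R :=
  \sum_(a < 4) (pd (christoffel g a b c) a x - pd (christoffel g a b a) c x
    + \sum_(d < 4) (christoffel g a a d x * christoffel g d b c x
                    - christoffel g a c d x * christoffel g d b a x)).

Definition ricci_scalar {R : realType} (g : point R -> 'M[R]_4) (x : point R) : R :=
  \sum_(m < 4) \sum_(n < 4) ginv g x m n * ricci g m n x.

Definition cov_hess {R : realType} (g : point R -> 'M[R]_4) (phi : point R -> R)
  (m n : 'I_4) (x : point R) : R :=
  pd (pd phi n) m x - \sum_(l < 4) christoffel g l m n x * pd phi l x.

Definition box {R : realType} (g : point R -> 'M[R]_4) (phi : point R -> R)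
  (x : point R) : R :=
  \sum_(m < 4) \sum_(n < 4) ginv g x m n * cov_hess g phi m n x.

Definition kappa {R : realType} (G c : R) : R := 8 * pi * G / c ^+ 4.

(* On an open set where the Ricci scalar equals k, the field f'(R) is constant, so
   its covariant Hessian and d'Alembertian vanish and the f(R) equations reduce to
   f'(k) R_mn - f(k)/2 g_mn = kappa T_mn.  Subtracting Einstein's equations and
   contracting with g^mn (using g^mn g_mn = 4 and g^mn R_mn = k) gives the claim. *)
From HB Require Import structures.
From mathcomp Require Import all_boot all_order all_algebra.
From mathcomp Require Import all_classical all_reals all_analysis.
From mathcomp Require Import ring lra.

Set Implicit Arguments.
Unset Strict Implicit.
Unset Printing Implicit Defensive.

Import Order.TTheory GRing.Theory Num.Theory.
Import numFieldNormedType.Exports.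
Local Open Scope classical_set_scope.
Local Open Scope ring_scope.

Section Contraction.
Variables (R : comNzRingType) (n : nat).

Definition contract (A : 'M[R]_n) (B : 'I_n -> 'I_n -> R) : R :=
  \sum_(i < n) \sum_(j < n) A i j * B i j.

Lemma contract_lin (A : 'M[R]_n) (B C : 'I_n -> 'I_n -> R) (a b : R) :
  contract A (fun i j => a * B i j + b * C i j) = a * contract A B + b * contract A C.
Proof.
rewrite /contract !mulr_sumr -big_split; apply: eq_bigr => i _ /=.
rewrite !mulr_sumr -big_split; apply: eq_bigr => j _ /=; ring.
Qed.

Lemma contract_trmx (A B : 'M[R]_n) : contract A B = \tr (A *m B^T).
Proof.
rewrite /mxtrace; apply: eq_bigr => i _; rewrite mxE.
by apply: eq_bigr => j _; rewrite mxE.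
Qed.

End Contraction.

Lemma contract_invmx (R : comUnitRingType) (n : nat) (B : 'M[R]_n) :
  B^T = B -> B \in unitmx -> contract (invmx B) B = n%:R.
Proof. by move=> BT Bu; rewrite contract_trmx BT mulVmx // mxtrace1. Qed.

Lemma ricci_scalarE (R : realType) (g : 'rV[R]_4 -> 'M[R]_4) (x : 'rV[R]_4) :
  ricci_scalar g x = contract (ginv g x) (fun m n => ricci g m n x).
Proof. by []. Qed.

Lemma pd_cst_on (R : realType) (U : set 'rV[R]_4) (F : 'rV[R]_4 -> R) (b : R) :
  open U -> (forall z, U z -> F z = b) ->
  forall (l : 'I_4) (y : 'rV[R]_4), U y -> pd F l y = 0.
Proof.
move=> oU FU l y Uy; rewrite /pd -(derive_cst b y (delta_mx 0 l)).
apply: near_eq_derive; apply: filterS (open_nbhs_nbhs (conj oU Uy)) => z.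
exact: FU.
Qed.

Section LocallyConstantField.
Variables (R : realType) (U : set 'rV[R]_4) (phi : 'rV[R]_4 -> R) (a : R).
Hypotheses (oU : open U) (phiU : forall z, U z -> phi z = a).

Lemma cov_hess_cst_on (g : 'rV[R]_4 -> 'M[R]_4) (m n : 'I_4) (x : 'rV[R]_4) :
  U x -> cov_hess g phi m n x = 0.
Proof.
move=> Ux; have pd_phi := pd_cst_on oU phiU.
rewrite /cov_hess (pd_cst_on oU (pd_phi n)) //.
by rewrite big1 ?subr0 // => l _; rewrite pd_phi ?mulr0.
Qed.

Lemma box_cst_on (g : 'rV[R]_4 -> 'M[R]_4) (x : 'rV[R]_4) :
  U x -> box g phi x = 0.
Proof.
move=> Ux; rewrite /box big1 // => m _.
by rewrite big1 // => n _; rewrite cov_hess_cst_on ?mulr0.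
Qed.

End LocallyConstantField.

Theorem mainTheorem2 (R : realType) (U : set 'rV[R]_4)
  (g T : 'rV[R]_4 -> 'M[R]_4) (f : R -> R) (G c Lambda k : R) :
  open U -> (exists x, U x) ->
  0 < G -> 0 < c ->
  (* g is a metric on U: symmetric, nondegenerate, twice differentiable *)
  (forall x, U x -> (g x)^T = g x /\ g x \in unitmx) ->
  (forall x, U x -> forall i j : 'I_4,
     differentiable (fun y => g y i j) x /\
     forall l : 'I_4, differentiable (pd (fun y => g y i j) l) x) ->
  (* f is differentiable *)
  (forall r : R, derivable f r 1) ->
  (* Einstein's field equations *)
  (forall x, U x -> forall m n : 'I_4,
     ricci g m n x - 2^-1 * ricci_scalar g x * g x m n + Lambda * g x m n
       = kappa G c * T x m n) ->
  (* f(R) field equations *)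
  (forall x, U x -> forall m n : 'I_4,
     derive1 f (ricci_scalar g x) * ricci g m n x
       - 2^-1 * f (ricci_scalar g x) * g x m n
       - cov_hess g (fun y => derive1 f (ricci_scalar g y)) m n x
       + box g (fun y => derive1 f (ricci_scalar g y)) x * g x m n
       = kappa G c * T x m n) ->
  (* constant Ricci scalar *)
  (forall x, U x -> ricci_scalar g x = k) ->
  k * derive1 f k - 2 * f k + k - 4 * Lambda = 0.
Proof.
move=> oU [x Ux] _ _ metric _ _ einstein fR scalarU.
set phi := fun y => derive1 f (ricci_scalar g y).
have phiU z : U z -> phi z = derive1 f k by move=> Uz; rewrite /phi scalarU.
have [gT gU] := metric x Ux; have kx := scalarU x Ux.
have reduced m n : derive1 f k * ricci g m n x + (- (2^-1 * f k)) * g x m n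
    = 1 * ricci g m n x + (Lambda - 2^-1 * k) * g x m n.
  have := fR x Ux m n; rewrite -/phi (cov_hess_cst_on oU phiU) //.
  rewrite (box_cst_on oU phiU) // -(einstein x Ux m n) kx => E.
  have -> : 1 * ricci g m n x + (Lambda - 2^-1 * k) * g x m n
      = ricci g m n x - 2^-1 * k * g x m n + Lambda * g x m n by ring.
  by rewrite -E; ring.
have E : contract (ginv g x)
      (fun m n => derive1 f k * ricci g m n x + - (2^-1 * f k) * g x m n)
    = contract (ginv g x) (fun m n => 1 * ricci g m n x + (Lambda - 2^-1 * k) * g x m n).
  by apply: eq_bigr => m _; apply: eq_bigr => n _; rewrite reduced.
rewrite !contract_lin -ricci_scalarE kx /ginv contract_invmx // in E.
by move: E; move: (derive1 f k) (f k) => d F; lra.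
Qed.
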